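(* Let $P,Q$ be finite posets and $p:Q\to P$ a quotient map, and let $\hat p:\mathcal{O}(Q)\to\mathcal{O}(P)$ be the map induced by $p$. Then $\hat p$ is a quotient map of posets (with respect to inclusion), it preserves unions ($\hat p(X\cup Y)=\hat p(X)\cup\hat p(Y)$), it maps join-irreducible elements (nonempty principal down-sets) to join-irreducible elements, and $\hat p(\downarrow x)=\downarrow p(x)$ for all $x\in Q$, i.e. $\hat p\circ\psi=\varphi\circ p$ where $\psi:Q\to\mathcal{O}(Q)$, $\varphi:P\to\mathcal{O}(P)$ are $x\mapsto\downarrow x$.
   Context: For a poset $P$, $\downarrow x=\{m\in P:m\le x\}$; a down-set is $D\subseteq P$ with $q\in D$, $m\le q\Rightarrow m\in D$; $\mathcal{O}(P)$ is the set of all down-sets of $P$ ordered by inclusion (a lattice with $\cup,\cap$). A quotient map between posets is a surjective order-preserving map $\phi:A\to B$ such that for all $a\le b$ in $B$ there are $x\le y$ in $A$ with $\phi(x)=a,\phi(y)=b$. Induced map: for a quotient map $p:Q\to P$ of finite posets, $\hat p(\emptyset)=\emptyset$ and, for a nonempty down-set $A\subseteq Q$ with maximal elements $a_1,\dots,a_k$ (so $A=\bigcup_i\downarrow a_i$), $\hat p(A)=\bigcup_{i=1}^k\downarrow p(a_i)$. *)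

From HB Require Import structures.
From mathcomp Require Import all_boot all_order.
Set Implicit Arguments. Unset Strict Implicit. Unset Printing Implicit Defensive.
Import Order.Theory.
Local Open Scope order_scope.

Section Defs.
Context {d : Order.disp_t} (P : finPOrderType d).

Definition is_downset (D : {set P}) : bool :=
  [forall q in D, forall m : P, (m <= q) ==> (m \in D)].

Definition dn (x : P) : {set P} := [set m | m <= x].

Definition is_max_in (A : {set P}) (a : P) : bool :=
  (a \in A) && [forall b in A, (a <= b) ==> (b == a)].

Definition join_irreducible_O (D : {set P}) : Prop :=
  is_downset D /\ D != set0 /\
  forall X Y : {set P}, is_downset X -> is_downset Y ->
    D = X :|: Y -> D = X \/ D = Y.
End Defs.

(* Quotient map between posets A and B, where the posets are given by a domain
   predicate and an order relation:  surjective onto the domain of B, order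
   preserving, and every relation a <= b in B lifts to a relation x <= y in A. *)
Definition quotient_map_on {A B : Type} (DA : A -> Prop) (leA : A -> A -> Prop)
    (DB : B -> Prop) (leB : B -> B -> Prop) (f : A -> B) : Prop :=
  (forall x, DA x -> DB (f x)) /\
  (forall b, DB b -> exists2 x, DA x & f x = b) /\
  (forall x y, DA x -> DA y -> leA x y -> leB (f x) (f y)) /\
  (forall a b, DB a -> DB b -> leB a b ->
     exists x y, [/\ DA x, DA y, leA x y, f x = a & f y = b]).

Definition quotient_map {dQ dP : Order.disp_t} {Q : finPOrderType dQ}
    {P : finPOrderType dP} (p : Q -> P) : Prop :=
  quotient_map_on (fun _ => True) (fun x y => x <= y)
                  (fun _ => True) (fun x y => x <= y) p.

Definition induced {dQ dP : Order.disp_t} {Q : finPOrderType dQ}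
    {P : finPOrderType dP} (p : Q -> P) (A : {set Q}) : {set P} :=
  \bigcup_(a in A | is_max_in A a) dn (p a).

(* In a finite poset every element of a set lies below a maximal element of
   it, so for monotone p the induced map sends a down-set A to the down-closure
   of p(A).  Down-closure of the image is monotone, commutes with unions and
   sends a principal down-set to a principal one; join-irreducible down-sets
   are exactly the principal ones.  A down-set B of P is the down-closure of
   the image of its preimage, which is a down-set of Q; taking preimages also
   lifts inclusions, so only surjectivity and monotonicity of p are needed. *)
From HB Require Import structures.
From mathcomp Require Import all_boot all_order.
Import Order.Theory.
Local Open Scope order_scope.

Section Downsets.
Context {d : Order.disp_t} {T : finPOrderType d}.

Lemma downsetP (D : {set T}) :
  reflect (forall q m, q \in D -> m <= q -> m \in D) (is_downset D).
Proof.
apply: (iffP forallP) => [H q m qD mq | H q].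
  by have /implyP/(_ qD)/forallP/(_ m)/implyP := H q; apply.
by apply/implyP => qD; apply/forallP => m; apply/implyP; exact: H.
Qed.

Lemma dn_downset (x : T) : is_downset (dn x).
Proof. by apply/downsetP => q m; rewrite !inE => qx mq; exact: le_trans qx. Qed.

Lemma exists_max_in_ge {A : {set T}} {a : T} :
  a \in A -> exists2 m, is_max_in A m & a <= m.
Proof.
move=> aA; have aS : a \in [set b in A | a <= b] by rewrite inE aA lexx.
(* a maximal element is one with a largest principal down-set *)
case: (arg_maxnP (fun m => #|dn m|) aS) => m mS Hm.
have /andP[mA am] : (m \in A) && (a <= m) by move: (mS : m \in _); rewrite inE.
exists m => //; rewrite /is_max_in mA; apply/forallP => b.
apply/implyP => bA; apply/implyP => mb.
have dn_mb : dn m \subset dn b.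
  by apply/subsetP => z; rewrite !inE => zm; exact: le_trans mb.
have bS : b \in [set b in A | a <= b] by rewrite inE bA (le_trans am mb).
have /eqP dn_eq : dn m == dn b by rewrite eqEcard dn_mb; exact: Hm.
have : b \in dn m by rewrite dn_eq inE lexx.
by rewrite inE => bm; rewrite eq_le bm mb.
Qed.

Lemma join_irreducible_dn (x : T) : join_irreducible_O (dn x).
Proof.
split; first exact: dn_downset.
split; first by apply/set0Pn; exists x; rewrite inE lexx.
move=> X Y /downsetP HX /downsetP HY E.
have : x \in X :|: Y by rewrite -E inE lexx.
rewrite inE => /orP[xX | xY]; [left | right]; apply/eqP;
  rewrite eqEsubset {2}E ?subsetUl ?subsetUr andbT;
  apply/subsetP => z; rewrite inE => zx; [exact: HX xX zx | exact: HY xY zx].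
Qed.

Lemma join_irreducible_principal (D : {set T}) :
  join_irreducible_O D -> exists x, D = dn x.
Proof.
case=> /downsetP HD [/set0Pn[a aD] HJ].
have [m /andP[mD /forallP mmax] _] := exists_max_in_ge aD.
exists m.
have HDm : is_downset (D :\ m).
  apply/downsetP => q z; rewrite !inE => /andP[qm qD] zq.
  rewrite (HD q z qD zq) andbT; apply: contraNneq qm => zm.
  by apply: (implyP (implyP (mmax q) qD)); rewrite -zm.
have E : D = dn m :|: (D :\ m).
  apply/setP => z; rewrite !inE; case: (eqVneq z m) => [-> | _] /=.
    by rewrite lexx mD.
  by apply/idP/orP => [-> | [zm | //]]; [right | exact: HD zm].
case: (HJ _ _ (dn_downset m) HDm E) => // E'.
by move: mD; rewrite {1}E' !inE eqxx.
Qed.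

End Downsets.

Section InducedMap.
Context {dQ dP : Order.disp_t} {Q : finPOrderType dQ} {P : finPOrderType dP}
  (p : Q -> P).
Hypothesis p_mono : {homo p : x y / x <= y}.

Definition downimage (A : {set Q}) : {set P} := [set y | [exists a in A, y <= p a]].

Lemma inducedE (A : {set Q}) : induced p A = downimage A.
Proof.
apply/setP => y; rewrite inE; apply/bigcupP/existsP.
  by case=> a /andP[aA _]; rewrite inE => ya; exists a; rewrite aA.
case=> a /andP[aA ya]; have [m mmax am] := exists_max_in_ge aA.
exists m; first by rewrite (andP mmax).1 mmax.
by rewrite inE (le_trans ya (p_mono _ _ am)).
Qed.

Lemma downimage_downset (A : {set Q}) : is_downset (downimage A).
Proof.
apply/downsetP => q z; rewrite !inE => /existsP[a /andP[aA qa]] zq.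
by apply/existsP; exists a; rewrite aA (le_trans zq qa).
Qed.

Lemma downimageS (A B : {set Q}) : A \subset B -> downimage A \subset downimage B.
Proof.
move/subsetP=> AB; apply/subsetP => y; rewrite !inE => /existsP[a /andP[aA ya]].
by apply/existsP; exists a; rewrite AB.
Qed.

Lemma downimageU (X Y : {set Q}) :
  downimage (X :|: Y) = downimage X :|: downimage Y.
Proof.
apply/setP => y; rewrite !inE; apply/existsP/orP.
  by case=> a /andP[]; rewrite inE => /orP[aX | aY] ya; [left | right];
    apply/existsP; exists a; rewrite ?aX ?aY.
by case=> /existsP[a /andP[aA ya]]; exists a; rewrite inE aA ?orbT.
Qed.

Lemma downimage_dn (x : Q) : downimage (dn x) = dn (p x).
Proof.
apply/setP => y; rewrite !inE; apply/existsP/idP => [[a] | yx].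
  by rewrite inE => /andP[ax ya]; exact: le_trans ya (p_mono _ _ ax).
by exists x; rewrite inE lexx.
Qed.

Lemma preimset_downset (B : {set P}) : is_downset B -> is_downset (p @^-1: B).
Proof.
move/downsetP=> HB; apply/downsetP => q z; rewrite !inE => qB zq.
exact: HB qB (p_mono _ _ zq).
Qed.

Lemma downimage_preimset (B : {set P}) :
  (forall b, exists x, p x = b) -> is_downset B -> downimage (p @^-1: B) = B.
Proof.
move=> p_surj /downsetP HB; apply/setP => y; rewrite inE.
apply/existsP/idP => [[a] | yB].
  by rewrite inE => /andP[aB ya]; exact: HB aB ya.
by have [x px] := p_surj y; exists x; rewrite inE px yB lexx.
Qed.

End InducedMap.

Theorem mainTheorem11 (dQ dP : Order.disp_t) (Q : finPOrderType dQ)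
    (P : finPOrderType dP) (p : Q -> P) :
  quotient_map p ->
  (* \hat p : O(Q) -> O(P) is a quotient map w.r.t. inclusion *)
  quotient_map_on (fun A : {set Q} => is_downset A)
                  (fun A B : {set Q} => A \subset B)
                  (fun A : {set P} => is_downset A)
                  (fun A B : {set P} => A \subset B) (induced p) /\
  (* preserves unions *)
  (forall X Y : {set Q}, is_downset X -> is_downset Y ->
     induced p (X :|: Y) = induced p X :|: induced p Y) /\
  (* maps join-irreducibles to join-irreducibles *)
  (forall D : {set Q}, join_irreducible_O D -> join_irreducible_O (induced p D)) /\
  (* \hat p (\downarrow x) = \downarrow p(x) *)
  (forall x : Q, induced p (dn x) = dn (p x)).
Proof.
case=> _ [p_onto [p_mono' _]].
have p_mono : {homo p : x y / x <= y} by move=> x y; exact: p_mono'.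
have p_surj b : exists x, p x = b by have [x _ <-] := p_onto b I; exists x.
have ind_pre B : is_downset B -> induced p (p @^-1: B) = B.
  by move=> HB; rewrite inducedE // downimage_preimset.
split; [split; [|split; [|split]] | split; [|split]].
- by move=> A _; rewrite inducedE //; exact: downimage_downset.
- by move=> B HB; exists (p @^-1: B); [exact: preimset_downset | exact: ind_pre].
- by move=> A B _ _ AB; rewrite !inducedE //; exact: downimageS.
- move=> A B HA HB AB; exists (p @^-1: A), (p @^-1: B).
  by split; rewrite ?preimset_downset ?ind_pre ?preimsetS.
- by move=> X Y _ _; rewrite !inducedE // downimageU.
- by move=> D /join_irreducible_principal[x ->];
    rewrite inducedE // downimage_dn //; exact: join_irreducible_dn.
- by move=> x; rewrite inducedE // downimage_dn.
Qed.
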